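(* Let $k$ be a field, $d\in\mathbb{N}$, $X=Q_d\times\mathcal{L}\mathbb{G}_m$ and $Y=\mathcal{L}^{\le d}\mathbb{A}^1$, and let $\beta_d:X\to Y$ be $\beta_d(q,u)=uq$. Then $\beta_d$ is surjective on $k$-points, and for every $x\in X(k)$ with image $y=\beta_d(x)\in Y(k)$ the induced morphism of formal completions $\hat X_x\to\hat Y_y$ is formally smooth.
   Context: $\mathcal{L}\mathbb{A}^1=\operatorname{Spec}k[x_0,x_1,\ldots]$ is the arc space of the affine line, whose $R$-points are formal series $x_0+x_1t+\cdots\in R[[t]]$. $\mathcal{L}^{\le d}\mathbb{A}^1$ is the open subscheme of $\mathcal{L}\mathbb{A}^1$ which is the preimage of the complement of $0$ under the projection to $\operatorname{Spec}k[x_0,\ldots,x_d]$; its $k$-points are the series of $t$-adic valuation $\le d$. $Q_d$ is the closed affine subspace of $\mathcal{L}\mathbb{A}^1$ defined by $x_d=1$, $x_{d+1}=x_{d+2}=\cdots=0$, i.e. monic polynomials of degree $d$. $\mathcal{L}\mathbb{G}_m$ represents $R\mapsto R[[t]]^\times$. Formal smoothness of $\hat X_x\to\hat Y_y$ means the infinitesimal lifting property with respect to surjections of Artinian local $k$-algebras. *)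

From mathcomp Require Import all_boot all_order all_algebra.
Set Implicit Arguments. Unset Strict Implicit. Unset Printing Implicit Defensive.
Import GRing.Theory.
Local Open Scope ring_scope.

Definition is_unit_el (R : comNzRingType) (x : R) : Prop := exists y : R, x * y = 1.

Definition is_ideal (R : comNzRingType) (I : R -> Prop) : Prop :=
  [/\ I 0, (forall a b, I a -> I b -> I (a + b)) & (forall r a, I a -> I (r * a))].

Definition local_ring (R : comNzRingType) : Prop :=
  is_ideal (fun x : R => ~ is_unit_el x).

Definition artinian (R : comNzRingType) : Prop :=
  forall I : nat -> R -> Prop,
    (forall n, is_ideal (I n)) -> (forall n x, I n.+1 x -> I n x) ->
    exists N, forall n, (N <= n)%N -> forall x, I n x <-> I N x.

(* A series a_0 + a_1 t + ... is represented by n |-> a_n. *)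
Definition smul (R : comNzRingType) (f g : nat -> R) : nat -> R :=
  fun n => \sum_(i < n.+1) f i * g (n - i)%N.

Definition sone (R : comNzRingType) : nat -> R := fun n => if n == 0%N then 1 else 0.

Definition Qd_pt (R : comNzRingType) (d : nat) (q : nat -> R) : Prop :=
  q d = 1 /\ forall n, (d < n)%N -> q n = 0.

Definition LGm_pt (R : comNzRingType) (u : nat -> R) : Prop :=
  exists v : nat -> R, forall n, smul u v n = sone R n.

(* R-points of L^{<=d} A^1 : series whose coefficients x_0..x_d generate the
   unit ideal of R (i.e. Spec R -> A^{d+1} lands in the complement of 0). *)
Definition LleA1_pt (R : comNzRingType) (d : nat) (f : nat -> R) : Prop :=
  exists c : nat -> R, \sum_(i < d.+1) c i * f i = 1.

(* For a local k-algebra A and a k-point s (a series over k), an A-series a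
   reduces to s modulo the maximal ideal (the non-units) of A. *)
Definition reduces_to (k : fieldType) (A : comAlgType k) (a : nat -> A) (s : nat -> k) : Prop :=
  forall n, ~ is_unit_el (a n - (s n)%:A).

(* Formal smoothness of \hat X_x -> \hat Y_y for beta_d at x = (q,u):
   infinitesimal lifting w.r.t. surjections A ->> B of Artinian local k-algebras. *)
Definition beta_formally_smooth_at (k : fieldType) (d : nat) (q u : nat -> k) : Prop :=
  forall (A B : comAlgType k) (phi : {lrmorphism A -> B}),
    local_ring A -> artinian A -> local_ring B -> artinian B ->
    (forall b : B, exists a : A, phi a = b) ->
    forall (qB uB : nat -> B) (fA : nat -> A),
      Qd_pt d qB -> LGm_pt uB -> reduces_to qB q -> reduces_to uB u ->
      LleA1_pt d fA -> reduces_to fA (smul u q) ->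
      (forall n, phi (fA n) = smul uB qB n) ->
      exists (qA uA : nat -> A),
        Qd_pt d qA /\ LGm_pt uA /\ reduces_to qA q /\ reduces_to uA u /\
        (forall n, phi (qA n) = qB n) /\ (forall n, phi (uA n) = uB n) /\
        (forall n, smul uA qA n = fA n).

(* Surjectivity: a series f of valuation v <= d is t^v e with e a unit, and
   t^v (1 + t^(d-v)) is monic of degree d with the same valuation.

   Formal smoothness is Weierstrass division over an Artinian local ring.  If q
   has valuation v, a lift fA of f = u q is regular of order v: its first v
   coefficients are non-units, hence nilpotent, and the v-th is a unit.  Writing
   fA = p + t^v e with deg p < v, solving "c fA agrees with h in degrees >= v"
   amounts to c + e^-1 t^-v (c p) = e^-1 t^-v h, and c |-> e^-1 t^-v (c p) is
   nilpotent, so the solution exists and is unique.  Dividing a monic lift of qB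
   by fA gives c; uniqueness of the division by qB over B forces phi(c) uB = 1,
   so c is a unit and (c fA, c^-1) is the required lift of (qB, uB). *)

From mathcomp Require Import all_boot all_order all_algebra ring.
From Stdlib Require Import FunctionalExtensionality Classical.
Set Implicit Arguments. Unset Strict Implicit. Unset Printing Implicit Defensive.
Import GRing.Theory.
Local Open Scope ring_scope.

(** * Formal power series *)

Section SeriesRing.
Variable R : comNzRingType.
Implicit Types f g h : nat -> R.

Definition trunc_poly (N : nat) f : {poly R} := \poly_(i < N) f i.

Lemma coefM_congr (p p' q q' : {poly R}) n :
  (forall i, (i <= n)%N -> p`_i = p'`_i) -> (forall i, (i <= n)%N -> q`_i = q'`_i) ->
  (p * q)`_n = (p' * q')`_n.
Proof.
move=> Ep Eq; rewrite !coefM; apply: eq_bigr => i _.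
by rewrite Ep ?Eq // ?leq_subr // -ltnS.
Qed.

Lemma smul_trunc_poly N f g n :
  (n < N)%N -> smul f g n = (trunc_poly N f * trunc_poly N g)`_n.
Proof.
move=> ltnN; rewrite coefM; apply: eq_bigr => i _.
have ltiN : (i < N)%N by apply: leq_ltn_trans ltnN; rewrite -ltnS.
by rewrite !coef_poly ltiN (leq_ltn_trans _ ltnN) ?leq_subr.
Qed.

Lemma coef_trunc_poly_smul N f g i :
  (i < N)%N -> (trunc_poly N (smul f g))`_i = (trunc_poly N f * trunc_poly N g)`_i.
Proof. by move=> ltiN; rewrite coef_poly ltiN (smul_trunc_poly _ _ ltiN). Qed.

Lemma smulC f g : smul f g = smul g f.
Proof.
apply: functional_extensionality => n.
by rewrite !(smul_trunc_poly _ _ (ltnSn n)) mulrC.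
Qed.

Lemma smulA f g h : smul f (smul g h) = smul (smul f g) h.
Proof.
apply: functional_extensionality => n; rewrite !(smul_trunc_poly _ _ (ltnSn n)).
rewrite (@coefM_congr _ (trunc_poly n.+1 f) _ (trunc_poly n.+1 g * trunc_poly n.+1 h)) //;
  last by move=> i lein; rewrite coef_trunc_poly_smul.
rewrite [RHS](@coefM_congr _ (trunc_poly n.+1 f * trunc_poly n.+1 g) _ (trunc_poly n.+1 h)) //;
  last by move=> i lein; rewrite coef_trunc_poly_smul.
by rewrite mulrA.
Qed.

Lemma smul1s g : smul (sone R) g = g.
Proof.
apply: functional_extensionality => n.
rewrite /smul big_ord_recl /= mul1r subn0 big1 ?addr0 // => i _.
by rewrite /sone /= mul0r.
Qed.

Lemma smuls1 f : smul f (sone R) = f.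
Proof. by rewrite smulC smul1s. Qed.

Lemma smulDr f g h : smul f (g \+ h) = smul f g \+ smul f h.
Proof.
apply: functional_extensionality => n.
by rewrite /smul /= -big_split; apply: eq_bigr => i _; rewrite mulrDr.
Qed.

Lemma smulBr f g h : smul f (g \- h) = smul f g \- smul f h.
Proof.
apply: functional_extensionality => n.
by rewrite /smul /= -sumrB; apply: eq_bigr => i _; rewrite mulrBr.
Qed.

Lemma smulBl f g h : smul (f \- g) h = smul f h \- smul g h.
Proof. by rewrite smulC smulBr ![smul h _]smulC. Qed.

Lemma smul0 f g : smul f g 0 = f 0%N * g 0%N.
Proof. by rewrite /smul big_ord1. Qed.

Lemma smuls0 f : smul f \0 = \0.
Proof.
by apply: functional_extensionality => n; rewrite /smul big1 // => i _; rewrite mulr0.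
Qed.

Definition shl (v : nat) f n := f (n + v)%N.
Definition shr (v : nat) f n := if (v <= n)%N then f (n - v)%N else 0.
Definition trunc (v : nat) f n := if (n < v)%N then f n else 0.

Lemma shr_smul v f g : smul (shr v f) g = shr v (smul f g).
Proof.
apply: functional_extensionality => n.
rewrite (smul_trunc_poly _ _ (ltnSn n)).
rewrite (@coefM_congr _ ('X^v * trunc_poly n.+1 f) _ (trunc_poly n.+1 g)) //; last first.
  move=> i lein; rewrite coefXnM !coef_poly /shr ltnS lein.
  by case: leqP => // leiv; rewrite ifT // ltnS (leq_trans (leq_subr _ _) lein).
rewrite -mulrA coefXnM /shr; case: leqP => // levn.
rewrite (smul_trunc_poly _ _ (ltnSn _)); apply: coefM_congr => i lein.
  by rewrite !coef_poly !ltnS lein (leq_trans lein (leq_subr _ _)).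
by rewrite !coef_poly !ltnS lein (leq_trans lein (leq_subr _ _)).
Qed.

Lemma shr_shl_low v f : (forall i, (i < v)%N -> f i = 0) -> shr v (shl v f) = f.
Proof.
move=> f_low; apply: functional_extensionality => n; rewrite /shr /shl.
by case: leqP => [/subnK -> // | /f_low ->].
Qed.

Lemma shr_shl_trunc v f : f = shr v (shl v f) \+ trunc v f.
Proof.
apply: functional_extensionality => n.
by rewrite /= /shr /shl /trunc; case: leqP => levn; rewrite ?subnK ?addr0 ?add0r.
Qed.

Section Inverse.
Variables (f : nat -> R) (a : R).
Hypothesis f0a : f 0%N * a = 1.

(* [inv_coefs n] lists the first [n.+1] coefficients of the inverse of [f]. *)
Fixpoint inv_coefs n : seq R :=
  if n is n'.+1 then
    let l := inv_coefs n' in rcons l (- a * \sum_(i < n'.+1) f i.+1 * nth 0 l (n' - i))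
  else [:: a].

Lemma size_inv_coefs n : size (inv_coefs n) = n.+1.
Proof. by elim: n => //= n IH; rewrite size_rcons IH. Qed.

Lemma nth_inv_coefs m n : (n <= m)%N -> nth 0 (inv_coefs m) n = nth 0 (inv_coefs n) n.
Proof.
move=> lenm; rewrite -(subnKC lenm); elim: (m - n)%N => [|k IH]; first by rewrite addn0.
by rewrite addnS /= nth_rcons size_inv_coefs ltnS leq_addr.
Qed.

Definition sinv n := nth 0 (inv_coefs n) n.

Lemma smul_sinv : smul f sinv = sone R.
Proof.
apply: functional_extensionality => -[|n]; first by rewrite smul0.
rewrite /smul big_ord_recl subn0 /sone /= {1}/sinv /= nth_rcons size_inv_coefs ltnn eqxx.
under [X in _ + X = _]eq_bigr => i _ do rewrite subSS /sinv -(@nth_inv_coefs n) ?leq_subr //.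
by rewrite mulrA mulrN f0a mulN1r addNr.
Qed.
End Inverse.

Lemma series_unit f : is_unit_el (f 0%N) -> LGm_pt f.
Proof. by case=> a f0a; exists (sinv f a); rewrite smul_sinv. Qed.

Lemma LGm_pt_coef0 f : LGm_pt f -> is_unit_el (f 0%N).
Proof. by case=> g fg; exists (g 0%N); rewrite -smul0 fg. Qed.

Lemma LGm_ptM f g : LGm_pt f -> LGm_pt g -> LGm_pt (smul f g).
Proof.
move=> [f' /functional_extensionality ff'] [g' /functional_extensionality gg'].
exists (smul g' f') => n.
by rewrite -smulA [smul g _]smulA gg' smul1s ff'.
Qed.

End SeriesRing.

Section SeriesRmorph.
Variables (A B : comNzRingType) (phi : {rmorphism A -> B}).

Lemma smul_rmorph f g : phi \o smul f g = smul (phi \o f) (phi \o g).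
Proof.
apply: functional_extensionality => n.
by rewrite /= rmorph_sum; apply: eq_bigr => i _; rewrite rmorphM.
Qed.

Lemma sone_rmorph : phi \o sone A = sone B.
Proof.
apply: functional_extensionality => n.
by rewrite /= /sone; case: (n == 0)%N; rewrite ?rmorph1 ?rmorph0.
Qed.

End SeriesRmorph.

(** * Local Artinian rings *)

Section LocalRing.
Variable R : comNzRingType.
Hypothesis R_local : local_ring R.

Lemma nonunitMl (r x : R) : ~ is_unit_el x -> ~ is_unit_el (r * x).
Proof. by case: R_local => _ _; apply. Qed.

Lemma nonunitD (x y : R) : ~ is_unit_el x -> ~ is_unit_el y -> ~ is_unit_el (x + y).
Proof. by case: R_local => _ + _; apply. Qed.

Lemma unitD_nonunit (x y : R) : is_unit_el x -> ~ is_unit_el y -> is_unit_el (x + y).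
Proof.
move=> ux ny; apply: NNPP => nxy.
by have := nonunitD nxy (nonunitMl (r:=-1) ny); rewrite mulN1r addrK.
Qed.

Hypothesis R_artinian : artinian R.

(* The chain of principal ideals (x^n) stabilises: x^N = a x^(N+1), and 1 - a x is a unit. *)
Lemma nonunit_nilpotent (x : R) : ~ is_unit_el x -> exists N, x ^+ N = 0.
Proof.
move=> nx; pose I n (y : R) := exists a, y = a * x ^+ n.
have I_ideal n : is_ideal (I n).
  split=> [|_ _ [a ->] [b ->]|r _ [a ->]].
  - by exists 0; rewrite mul0r.
  - by exists (a + b); rewrite mulrDl.
  - by exists (r * a); rewrite mulrA.
have I_decr n y : I n.+1 y -> I n y by case=> a ->; exists (a * x); rewrite exprS mulrA.
have [N IN] := R_artinian I_ideal I_decr.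
have [a xNE] : I N.+1 (x ^+ N) by apply/(IN N.+1 (leqnSn N)); exists 1; rewrite mul1r.
exists N; have [y uy] : is_unit_el (1 - a * x).
  apply: NNPP => nu; have := nonunitD nu (nonunitMl (r:=a) nx).
  by rewrite subrK; apply; exists 1; rewrite mulr1.
have xN0 : x ^+ N * (1 - a * x) = 0 by rewrite mulrBr mulr1 mulrCA -exprSr -xNE subrr.
by rewrite -[x ^+ N]mulr1 -uy mulrA xN0 mul0r.
Qed.

Lemma nonunit_rmorph (S : comNzRingType) (phi : {rmorphism R -> S}) (x : R) :
  ~ is_unit_el x -> ~ is_unit_el (phi x).
Proof.
move=> /nonunit_nilpotent[N xN0] [y xy].
have : (phi x * y) ^+ N = 1 by rewrite xy expr1n.
by rewrite exprMn -rmorphXn xN0 rmorph0 mul0r => /eqP; rewrite eq_sym oner_eq0.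
Qed.

End LocalRing.

Section IdealPower.
Variables (R : comNzRingType) (m : nat) (p : 'I_m -> R).

Definition monomial (e : {ffun 'I_m -> nat}) := \prod_(j < m) p j ^+ e j.

(* [ideal_pow k x]: x belongs to the k-th power of the ideal generated by the [p j]. *)
Definition ideal_pow k (x : R) := exists s : seq (R * {ffun 'I_m -> nat}),
  x = \sum_(z <- s) z.1 * monomial z.2 /\
  all (fun z : R * {ffun 'I_m -> nat} => k <= \sum_(j < m) z.2 j)%N s.

Lemma ideal_pow_trivial x : ideal_pow 0 x.
Proof.
exists [:: (x, [ffun => 0%N])]; rewrite big_seq1 /monomial /=; split => //.
by rewrite big1 ?mulr1 // => j _; rewrite ffunE expr0.
Qed.

Lemma ideal_pow0 k : ideal_pow k 0.
Proof. by exists [::]; rewrite big_nil. Qed.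

Lemma ideal_powD k x y : ideal_pow k x -> ideal_pow k y -> ideal_pow k (x + y).
Proof. by move=> [s [-> sk]] [t [-> tk]]; exists (s ++ t); rewrite big_cat all_cat sk tk. Qed.

Lemma ideal_powMl k r x : ideal_pow k x -> ideal_pow k (r * x).
Proof.
move=> [s [-> sk]]; exists [seq (r * z.1, z.2) | z <- s]; rewrite all_map; split=> //.
by rewrite big_map mulr_sumr; apply: eq_bigr => z _; rewrite mulrA.
Qed.

Lemma ideal_pow_sum k n (F : 'I_n -> R) :
  (forall i, ideal_pow k (F i)) -> ideal_pow k (\sum_(i < n) F i).
Proof. by move=> Fk; elim/big_ind: _ => //; [apply: ideal_pow0 | apply: ideal_powD]. Qed.

Lemma ideal_pow_genMl k j x : ideal_pow k x -> ideal_pow k.+1 (p j * x).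
Proof.
move=> [s [-> sk]]; pose incr (e : {ffun 'I_m -> nat}) := [ffun i => e i + (i == j)]%N.
have monomial_incr e : monomial (incr e) = p j * monomial e.
  rewrite /monomial (bigD1 j) //= [in RHS](bigD1 j) //= !ffunE eqxx addn1 exprS -mulrA.
  by congr (_ * (_ * _)); apply: eq_bigr => i /negbTE ij; rewrite ffunE ij addn0.
have deg_incr e : (\sum_(i < m) incr e i = (\sum_(i < m) e i).+1)%N.
  rewrite (bigD1 j) //= [in RHS](bigD1 j) //= ffunE eqxx addn1 addSn.
  by congr (_ + _).+1; apply: eq_bigr => i /negbTE ij; rewrite ffunE ij addn0.
exists [seq (z.1, incr z.2) | z <- s]; split.
  by rewrite big_map mulr_sumr; apply: eq_bigr => z _; rewrite monomial_incr mulrCA.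
by rewrite all_map; apply: sub_all sk => z /=; rewrite deg_incr.
Qed.

(* Pigeonhole: a monomial of degree > m N contains some [p j ^+ N]. *)
Lemma ideal_pow_eq0 N x : (forall j, p j ^+ N = 0) -> ideal_pow (m * N).+1 x -> x = 0.
Proof.
move=> pN0 [s [-> sk]]; rewrite big_seq big1 // => z zs.
have [j leNj] : exists j, (N <= z.2 j)%N.
  apply: NNPP => small; have := allP sk z zs; apply/negP; rewrite -leqNgt.
  rewrite -[m in (_ <= m * _)%N]card_ord -sum_nat_const; apply: leq_sum => i _.
  by rewrite leqNgt; apply/negP => ltNi; apply: small; exists i; apply: ltnW.
by rewrite /monomial (bigD1 j) //= -(subnKC leNj) exprD pN0 !mul0r mulr0.
Qed.

End IdealPower.

(** * Weierstrass division *)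

Section WeierstrassDivision.
Variables (R : comNzRingType) (g : nat -> R) (v : nat) (einv : nat -> R) (N : nat).
Hypothesis einvK : smul einv (shl v g) = sone R.
Hypothesis low_nilpotent : forall j, (j < v)%N -> g j ^+ N = 0.

Let low (j : 'I_v) := g j.

(* With g = p + t^v e (deg p < v), multiplying [t^-v (c g)] by e^-1 gives [c + tail c]. *)
Let tail c := smul einv (shl v (smul c (trunc v g))).

Lemma smul_einv_shl c : smul einv (shl v (smul c g)) = c \+ tail c.
Proof.
have split_g : shl v (smul c g) = smul c (shl v g) \+ shl v (smul c (trunc v g)).
  rewrite {1}(shr_shl_trunc v g) smulDr smulC shr_smul smulC.
  by apply: functional_extensionality => n; rewrite /shl /= /shr leq_addl addnK.
by rewrite split_g smulDr smulA [smul einv c]smulC -smulA einvK smuls1.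
Qed.

Lemma tailB c c' : tail (c \- c') = tail c \- tail c'.
Proof. by rewrite /tail smulBl -smulBr. Qed.

Lemma tail_ideal_pow k c :
  (forall n, ideal_pow low k (c n)) -> forall n, ideal_pow low k.+1 (tail c n).
Proof.
move=> ck n; apply: ideal_pow_sum => i; apply: ideal_powMl.
apply: ideal_pow_sum => j; rewrite /trunc; case: ltnP => [ltv|_].
  by rewrite mulrC (_ : g _ = low (Ordinal ltv)) //; apply: ideal_pow_genMl.
by rewrite mulr0; apply: ideal_pow0.
Qed.

Let low_ideal_pow_eq0 x : ideal_pow low (v * N).+1 x -> x = 0.
Proof. by apply: ideal_pow_eq0 => j; apply: low_nilpotent. Qed.

Lemma weierstrass_unique_of c : shl v (smul c g) = \0 -> c = \0.
Proof.
move=> cg0; have ctail n : c n + tail c n = 0.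
  by rewrite -[LHS]/((c \+ tail c) n) -smul_einv_shl cg0 smuls0.
have ck k n : ideal_pow low k (c n).
  elim: k n => [|k IH] n; first exact: ideal_pow_trivial.
  have -> : c n = -1 * tail c n by apply/eqP; rewrite mulN1r -addr_eq0 ctail.
  by apply: ideal_powMl; apply: tail_ideal_pow.
by apply: functional_extensionality => n; apply: low_ideal_pow_eq0.
Qed.

Fixpoint tail_approx h k := if k is k'.+1 then h \- tail (tail_approx h k') else \0.

Lemma weierstrass_exists_of h : exists c, shl v (smul c g) = shl v h.
Proof.
pose h' := smul einv (shl v h).
have step k n : ideal_pow low k (tail_approx h' k.+1 n - tail_approx h' k n).
  elim: k n => [|k IH] n; first exact: ideal_pow_trivial.
  have -> : tail_approx h' k.+2 n - tail_approx h' k.+1 n =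
            -1 * tail (tail_approx h' k.+1 \- tail_approx h' k) n.
    by rewrite tailB /=; ring.
  by apply: ideal_powMl; apply: tail_ideal_pow.
have fixed : tail_approx h' (v * N).+2 = tail_approx h' (v * N).+1.
  apply: functional_extensionality => n; apply/eqP; rewrite -subr_eq0.
  exact/eqP/low_ideal_pow_eq0/step.
have solves : tail_approx h' (v * N).+1 \+ tail (tail_approx h' (v * N).+1) = h'.
  rewrite -[X in X \+ _]fixed; apply: functional_extensionality => n.
  by rewrite /= subrK.
have cancel x : smul (shl v g) (smul einv x) = x.
  by rewrite smulA [smul (shl v g) einv]smulC einvK smul1s.
exists (tail_approx h' (v * N).+1).
by rewrite -[LHS]cancel -[RHS]cancel smul_einv_shl solves.
Qed.

End WeierstrassDivision.

Definition regular_of_order (R : comNzRingType) (g : nat -> R) v :=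
  (forall i, (i < v)%N -> ~ is_unit_el (g i)) /\ is_unit_el (g v).

Section RegularSeries.
Variables (R : comNzRingType) (g : nat -> R) (v : nat).
Hypotheses (R_local : local_ring R) (R_artinian : artinian R).
Hypothesis g_regular : regular_of_order g v.

Lemma regular_shl_inv : exists einv, smul einv (shl v g) = sone R.
Proof.
have [w gw] : LGm_pt (shl v g) by apply: series_unit; rewrite /shl add0n; case: g_regular.
by exists w; rewrite smulC; apply: functional_extensionality.
Qed.

Lemma regular_low_nilpotent : exists N, forall j, (j < v)%N -> g j ^+ N = 0.
Proof.
have /fin_all_exists[N gN0] (j : 'I_v) : exists N, g j ^+ N = 0.
  by apply: nonunit_nilpotent => //; case: g_regular => + _; apply.
exists (\max_(j < v) N j) => j ltjv.
by rewrite -(subnKC (leq_bigmax (Ordinal ltjv))) exprD (gN0 (Ordinal ltjv)) mul0r.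
Qed.

Lemma weierstrass_division h : exists c, shl v (smul c g) = shl v h.
Proof.
have [einv einvK] := regular_shl_inv; have [N gN0] := regular_low_nilpotent.
exact: weierstrass_exists_of einvK gN0 h.
Qed.

Lemma weierstrass_division_unique c c' : shl v (smul c g) = shl v (smul c' g) -> c = c'.
Proof.
have [einv einvK] := regular_shl_inv; have [N gN0] := regular_low_nilpotent.
move=> cc'g; have /(weierstrass_unique_of einvK gN0) cc'0 : shl v (smul (c \- c') g) = \0.
  apply: functional_extensionality => n.
  by rewrite smulBl /shl /= -[smul c g _]/(shl v _ n) cc'g subrr.
apply: functional_extensionality => n; apply/eqP; rewrite -subr_eq0.
by rewrite -[_ - _]/((c \- c') n) cc'0.
Qed.

End RegularSeries.

(** * Factorisations f = u q *)

Lemma exists_valuation (R : nzRingType) (f : nat -> R) n :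
  f n != 0 -> exists v, [/\ (v <= n)%N, f v != 0 & forall i, (i < v)%N -> f i = 0].
Proof.
move=> fn0; have exf : exists n, f n != 0 by exists n.
case: (ex_minnP exf) => v fv0 vmin; exists v; split=> // [|i ltiv]; first exact: vmin.
by apply/eqP; apply: contraTT ltiv => /vmin; rewrite -leqNgt.
Qed.

Lemma Qd_pt_shl (R : comNzRingType) d v (f g : nat -> R) :
  (v <= d)%N -> shl v f = shl v g -> Qd_pt d g -> Qd_pt d f.
Proof.
move=> levd fg [gd g_high].
have fgE n : (v <= n)%N -> f n = g n by move=> /subnK <-; apply: (congr1 (@^~ _) fg).
split=> [|n ltdn]; first by rewrite fgE.
by rewrite fgE ?g_high // (leq_trans levd (ltnW ltdn)).
Qed.

Lemma Qd_pt_lift (A B : comNzRingType) (phi : {rmorphism A -> B}) d (qB : nat -> B) :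
  (forall b, exists a, phi a = b) -> Qd_pt d qB -> exists qA, Qd_pt d qA /\ phi \o qA = qB.
Proof.
move=> phi_surj [qBd qB_high].
have /fin_all_exists[lift liftK] (i : 'I_d) : exists a, phi a = qB i by apply: phi_surj.
exists (fun n => if insub n is Some i then lift i else (n == d)%:R); split.
  split=> [|n ltdn]; first by rewrite insubF ?ltnn ?eqxx.
  by rewrite insubF ?gtn_eqF // ltnNge ltnW.
apply: functional_extensionality => n /=; case: (ltnP n d) => [ltnd | ledn].
  by rewrite insubT liftK.
rewrite insubF ?ltnNge ?ledn // rmorph_nat; case: eqP => [-> // | /eqP nd].
by rewrite qB_high // ltn_neqAle eq_sym nd.
Qed.

Section Reduction.
Variables (k : fieldType) (A : comAlgType k).

Lemma reduces_regular (a : nat -> A) (s : nat -> k) v : local_ring A ->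
  reduces_to a s -> (forall i, (i < v)%N -> s i = 0) -> s v != 0 -> regular_of_order a v.
Proof.
move=> A_local a_red s_low sv0; split=> [i ltiv|].
  by have := a_red i; rewrite s_low // scale0r subr0.
rewrite -[a v](subrK (s v)%:A) addrC; apply: unitD_nonunit => //.
by exists (s v)^-1%:A; rewrite -scalerAl mul1r scalerA mulfV ?scale1r.
Qed.

Lemma reduces_to_rmorph (B : comAlgType k) (phi : {lrmorphism A -> B}) a s :
  reduces_to (phi \o a) s -> reduces_to a s.
Proof.
move=> a_red n [y ay]; apply: (a_red n); exists (phi y).
by rewrite /= -(rmorph_alg phi) -rmorphB -rmorphM ay rmorph1.
Qed.

End Reduction.

Lemma monic_unit_factorization (k : fieldType) d (f : nat -> k) : LleA1_pt d f ->
  exists q u : nat -> k, [/\ Qd_pt d q, LGm_pt u & forall n, smul u q n = f n].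
Proof.
move=> [c cf1]; have [i fi0] : exists i : 'I_d.+1, f i != 0.
  apply/existsP/contraT => /existsPn f0; move: cf1; rewrite big1 => [/eqP|j _].
    by rewrite eq_sym oner_eq0.
  by rewrite (eqP (negbNE (f0 j))) mulr0.
have [v [levi fv0 f_low]] := exists_valuation fi0.
have levd : (v <= d)%N by rewrite (leq_trans levi) // -ltnS.
(* q = t^v r with r = 1 + t^(d-v), read as r = 1 when v = d. *)
pose r n : k := ((n == 0%N) || (n == d - v)%N)%:R.
have [r' /functional_extensionality rr'] : LGm_pt r.
  by apply: series_unit; rewrite /r eqxx; exists 1; rewrite mulr1.
exists (shr v r), (smul (shl v f) r'); split.
- split=> [|n ltdn]; first by rewrite /shr levd /r eqxx orbT.
  have levn : (v <= n)%N by rewrite (leq_trans levd) // ltnW.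
  by rewrite /shr levn /r subn_eq0 leqNgt (leq_trans _ ltdn) // eqn_sub2rE // gtn_eqF.
- apply: LGm_ptM; first by apply: series_unit; rewrite /shl add0n; exists (f v)^-1; rewrite mulfV.
  by exists r => n; rewrite smulC rr'.
- move=> n; rewrite smulC shr_smul smulA [smul r _]smulC -smulA rr' smuls1.
  by rewrite shr_shl_low.
Qed.

Section Lifting.
Variables (k : fieldType) (A B : comAlgType k) (phi : {lrmorphism A -> B}).
Hypotheses (A_local : local_ring A) (A_artinian : artinian A).
Hypotheses (B_local : local_ring B) (B_artinian : artinian B).
Hypothesis phi_surj : forall b, exists a, phi a = b.
Variables (d : nat) (q u : nat -> k) (qB uB : nat -> B) (fA : nat -> A).
Hypotheses (q_monic : Qd_pt d q) (u_unit : LGm_pt u).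
Hypotheses (qB_monic : Qd_pt d qB) (qB_red : reduces_to qB q) (uB_red : reduces_to uB u).
Hypotheses (fA_red : reduces_to fA (smul u q)) (fA_lifts : phi \o fA = smul uB qB).

Lemma weierstrass_cofactor :
  exists c, [/\ smul (phi \o c) uB = sone B, Qd_pt d (smul c fA) & phi \o smul c fA = qB].
Proof.
have qd0 : q d != 0 by case: q_monic => -> _; apply: oner_neq0.
have [v [levd qv0 q_low]] := exists_valuation qd0.
have u00 : u 0%N != 0.
  have [w] := LGm_pt_coef0 u_unit; apply: contra_eq_neq => ->.
  by rewrite mul0r eq_sym oner_neq0.
have uq_shr : smul u q = shr v (smul (shl v q) u) by rewrite -shr_smul shr_shl_low // smulC.
have fA_reg : regular_of_order fA v.
  apply: reduces_regular fA_red _ _ => // [i ltiv|]; rewrite uq_shr /shr.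
    by rewrite leqNgt ltiv.
  by rewrite leqnn subnn smul0 mulf_neq0 // /shl add0n.
have qB_reg : regular_of_order qB v by apply: reduces_regular qB_red q_low qv0.
have [qA [qA_monic qA_lifts]] := Qd_pt_lift phi_surj qB_monic.
have [c cfA] := weierstrass_division A_local A_artinian fA_reg qA.
have phic_uB : smul (phi \o c) uB = sone B.
  apply: (weierstrass_division_unique B_local B_artinian qB_reg).
  rewrite -smulA -fA_lifts -smul_rmorph smul1s -qA_lifts.
  by apply: functional_extensionality => n; rewrite /shl /= -[smul c fA _]/(shl v _ n) cfA.
exists c; split=> //; first exact: Qd_pt_shl levd cfA qA_monic.
by rewrite smul_rmorph fA_lifts smulA phic_uB smul1s.
Qed.

Lemma lift_inverse c :
  smul (phi \o c) uB = sone B -> exists uA, smul uA c = sone A /\ phi \o uA = uB.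
Proof.
move=> phic_uB; have [a ca] : is_unit_el (c 0%N).
  apply: NNPP => /(nonunit_rmorph A_local A_artinian (phi := phi)); apply; exists (uB 0%N).
  by have := congr1 (@^~ 0%N) phic_uB; rewrite smul0.
exists (sinv c a); split; first by rewrite smulC smul_sinv.
rewrite -[LHS]smuls1 -phic_uB smulA -smul_rmorph [smul (sinv c a) c]smulC.
by rewrite (smul_sinv ca) sone_rmorph smul1s.
Qed.

Lemma lift_factorization : exists qA uA : nat -> A,
  Qd_pt d qA /\ LGm_pt uA /\ reduces_to qA q /\ reduces_to uA u /\
  (forall n, phi (qA n) = qB n) /\ (forall n, phi (uA n) = uB n) /\
  (forall n, smul uA qA n = fA n).
Proof.
have [c [phic_uB qA_monic qA_lifts]] := weierstrass_cofactor.
have [uA [uAc uA_lifts]] := lift_inverse phic_uB.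
exists (smul c fA), uA.
split; last split; last split; last split; last split; last split.
- exact: qA_monic.
- by exists c => n; rewrite uAc.
- by apply: (reduces_to_rmorph (phi := phi)); rewrite qA_lifts.
- by apply: (reduces_to_rmorph (phi := phi)); rewrite uA_lifts.
- by move=> n; rewrite -qA_lifts.
- by move=> n; rewrite -uA_lifts.
- by move=> n; rewrite smulA uAc smul1s.
Qed.

End Lifting.

Theorem proposition3p8 (k : fieldType) (d : nat) :
  (forall f : nat -> k, LleA1_pt d f ->
     exists q u : nat -> k, [/\ Qd_pt d q, LGm_pt u & forall n, smul u q n = f n]) /\
  (forall q u : nat -> k, Qd_pt d q -> LGm_pt u -> beta_formally_smooth_at d q u).
Proof.
split=> [f|q u q_monic u_unit]; first exact: monic_unit_factorization.
(* The hypotheses [LGm_pt uB] and [LleA1_pt d fA] are implied by the others. *)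
move=> A B phi A_local A_artinian B_local B_artinian phi_surj qB uB fA.
move=> qB_monic _ qB_red uB_red _ fA_red /functional_extensionality fA_lifts.
exact: lift_factorization.
Qed.
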